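(* For $m\ge1$ and $n\ge2$, \[ G_{m,n}=\frac{2(-1)^{n-1}}{n!}\int_0^1\binom{t}{m}\left[{n\atop 2}\right]_{t-1}dt . \]
   Context: The generalized Gregory coefficients $G_{m,n}$ are defined by $\sum_{m,n\ge0}G_{m,n}x^my^n=\dfrac{y\log^2(1+x)-x\log^2(1+y)}{\log(1+x)-\log(1+y)}$ (formal power series; $\log^ku=(\log u)^k$). $\binom{t}{m}=t(t-1)\cdots(t-m+1)/m!$. The Stirling polynomials of the first kind $\left[{n\atop m}\right]_x\in\mathbb Z[x]$ ($n\ge m\ge0$) are defined by $\sum_{m=0}^n\left[{n\atop m}\right]_x y^m=(x+y)(x+y+1)\cdots(x+y+n-1)$; equivalently $(1-t)^{-x}\frac{(-1)^m}{m!}\log^m(1-t)=\sum_{n\ge m}\left[{n\atop m}\right]_x\frac{t^n}{n!}$. *)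

From HB Require Import structures.
From mathcomp Require Import all_boot all_order all_algebra.
From mathcomp Require Import all_classical all_reals all_analysis.
Set Implicit Arguments. Unset Strict Implicit. Unset Printing Implicit Defensive.
Import Order.TTheory GRing.Theory Num.Theory.
Import numFieldNormedType.Exports.
Local Open Scope ring_scope.

Section Defs.
Variable R : realType.

(* Coefficients of log(1+x) = sum_{k>=1} (-1)^(k+1) x^k / k  (l 0 = 0). *)
Definition logc (k : nat) : R :=
  if k is 0 then 0 else (-1) ^+ k.+1 / k%:R.

(* Coefficients of log^2(1+x) (Cauchy square). *)
Definition log2c (k : nat) : R :=
  \sum_(i < k.+1) logc i * logc (k - i).

(* Bivariate formal power series are functions nat -> nat -> R
   (F a b = coefficient of x^a y^b). *)

(* Denominator  log(1+x) - log(1+y). *)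
Definition denomc (a b : nat) : R :=
  (if b == 0%N then logc a else 0) - (if a == 0%N then logc b else 0).

(* Numerator  y log^2(1+x) - x log^2(1+y). *)
Definition numerc (a b : nat) : R :=
  (if b == 1%N then log2c a else 0) - (if a == 1%N then log2c b else 0).

Definition bimul (F H : nat -> nat -> R) (a b : nat) : R :=
  \sum_(i < a.+1) \sum_(j < b.+1) F i j * H (a - i)%N (b - j)%N.

(* G is the (generalized Gregory) coefficient array of the quotient
   (y log^2(1+x) - x log^2(1+y)) / (log(1+x) - log(1+y)),
   i.e. G * denominator = numerator as formal power series. *)
Definition is_gregory (G : nat -> nat -> R) : Prop :=
  forall a b, bimul G denomc a b = numerc a b.

Definition gbinom (t : R) (m : nat) : R :=
  (\prod_(i < m) (t - i%:R)) / m`!%:R.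

Definition stirling1p (n m : nat) (x : R) : R :=
  (\prod_(k < n) ('X + (x + k%:R)%:P))`_m.

End Defs.

(* Let binomp a be the polynomial binom(t, a), so that sum_a binomp a x^a is (1+x)^t.
   Differentiating in t multiplies by log(1+x); coefficientwise this says that
   (binomp a)' and (binomp a)'' are the convolutions of binomp with the
   coefficients of log(1+x) and log^2(1+x).  The candidate solution is
     y (log(1+x) + log(1+y)) - int_0^1 (1+x)^t (1+y)^(1-t) log^2(1+y) dt,
   i.e. [gregory_edge a b - int_0^1 binomp a (t) * (binomp b)''(1-t) dt].
   Multiplying the integral by log(1+x) - log(1+y) produces the t-derivative
   of the integrand, so by the fundamental theorem of calculus only the values
   at t = 0 and t = 1 survive, and these give the numerator.  The quotient is
   unique since the denominator starts with x - y.  Finally, the rising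
   factorial y (y+1) ... (y+n-1) equals (-1)^n n! binom(-y, n), so the Stirling
   polynomial [n 2]_(t-1) is, up to the constant (-1)^n n!/2, the value
   (binomp n)''(1-t) appearing in the integrand. *)

From HB Require Import structures.
From mathcomp Require Import all_boot all_order all_algebra.
From mathcomp Require Import all_classical all_reals all_analysis.
From mathcomp Require Import ring.
Import Order.TTheory GRing.Theory Num.Theory.
Import numFieldNormedType.Exports.
Local Open Scope classical_set_scope.
Local Open Scope ring_scope.
Set Implicit Arguments. Unset Strict Implicit. Unset Printing Implicit Defensive.

Section Convolution.
Variable T : comNzRingType.
Implicit Types f g h : nat -> T.

Definition conv f g (n : nat) : T := \sum_(i < n.+1) f i * g (n - i)%N.

Lemma convC f g : conv f g =1 conv g f.
Proof.
move=> n; rewrite /conv (reindex_inj rev_ord_inj) /=; apply: eq_bigr => i _.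
by rewrite subSS subKn 1?mulrC // -ltnS.
Qed.

Lemma eq_conv f f' g g' : f =1 f' -> g =1 g' -> conv f g =1 conv f' g'.
Proof. by move=> ff' gg' n; apply: eq_bigr => i _; rewrite ff' gg'. Qed.

(* Below degree n, conv is the coefficient sequence of a product of
   truncated polynomials, so associativity comes from {poly T}. *)
Definition trunc_poly (n : nat) f : {poly T} := \poly_(i < n.+1) f i.

Lemma conv_coefM f g n k :
  (k <= n)%N -> conv f g k = (trunc_poly n f * trunc_poly n g)`_k.
Proof.
move=> kn; rewrite coefM; apply: eq_bigr => i _.
rewrite !coef_poly !ifT //.
- by rewrite ltnS (leq_trans (leq_subr _ _) kn).
- by rewrite ltnS (leq_trans _ kn) // -ltnS.
Qed.

Lemma eq_coefM_low (p q r : {poly T}) n :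
  (forall k, (k <= n)%N -> p`_k = q`_k) -> (p * r)`_n = (q * r)`_n.
Proof. by move=> pq; rewrite !coefM; apply: eq_bigr => i _; rewrite pq // -ltnS. Qed.

Lemma convA f g h : conv (conv f g) h =1 conv f (conv g h).
Proof.
move=> n; rewrite (conv_coefM _ _ (leqnn n)).
rewrite (@eq_coefM_low _ (trunc_poly n f * trunc_poly n g)); last first.
  by move=> k kn; rewrite coef_poly ltnS kn (conv_coefM _ _ kn).
rewrite -mulrA convC (conv_coefM _ _ (leqnn n)) mulrC.
apply: eq_coefM_low => k kn.
by rewrite coef_poly ltnS kn (conv_coefM _ _ kn) mulrC.
Qed.

Lemma conv_mull t f g n : conv (fun i => t * f i) g n = t * conv f g n.
Proof. by rewrite /conv mulr_sumr; apply: eq_bigr => i _; rewrite mulrA. Qed.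

Lemma conv_mulr t f g n : conv (fun i => f i * t) g n = conv f g n * t.
Proof. by rewrite /conv mulr_suml; apply: eq_bigr => i _; rewrite mulrAC. Qed.

Lemma convDl f1 f2 g n :
  conv (fun i => f1 i + f2 i) g n = conv f1 g n + conv f2 g n.
Proof. by rewrite -big_split; apply: eq_bigr => i _; rewrite mulrDl. Qed.

Lemma conv_ifl (P : bool) f g n :
  conv (fun i => if P then f i else 0) g n = if P then conv f g n else 0.
Proof. by case: P => //; apply: big1 => i _; rewrite mul0r. Qed.

End Convolution.

Section ConstantConvolution.
Variable T : comNzRingType.
Implicit Types (f : nat -> {poly T}) (c d : nat -> T).

Lemma conv_polyC c d n :
  conv (fun k => (c k)%:P) (fun k => (d k)%:P) n = (conv c d n)%:P.
Proof. by rewrite /conv rmorph_sum; apply: eq_bigr => i _; rewrite rmorphM. Qed.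

Lemma deriv_conv_polyC f c n :
  (conv f (fun k => (c k)%:P) n)^`() = conv (fun k => (f k)^`()) (fun k => (c k)%:P) n.
Proof.
by rewrite raddf_sum; apply: eq_bigr => i _ /=; rewrite ![_ * _%:P]mulrC deriv_mulC.
Qed.

Lemma comp_conv_polyC f c q n :
  conv f (fun k => (c k)%:P) n \Po q = conv (fun k => f k \Po q) (fun k => (c k)%:P) n.
Proof.
by rewrite raddf_sum; apply: eq_bigr => i _ /=; rewrite comp_polyM comp_polyC.
Qed.

Lemma horner_conv_polyC f c x n :
  (conv f (fun k => (c k)%:P) n).[x] = conv (fun k => (f k).[x]) c n.
Proof. by rewrite horner_sum; apply: eq_bigr => i _; rewrite hornerM hornerC. Qed.

End ConstantConvolution.

Section Taylor.
Variable T : comNzRingType.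

Lemma deriv_compN (p : {poly T}) : (p \Po - 'X)^`() = - (p^`() \Po - 'X).
Proof. by rewrite deriv_comp derivN derivX mulrN1. Qed.

Lemma coef_comp_shift (p : {poly T}) (x : T) k :
  (p \Po ('X + x%:P))`_k = p^`N(k).[x].
Proof.
have sz : (size (p^:P) <= k.+1 + size p)%N by rewrite size_map_polyC leq_addl.
rewrite /comp_poly addrC (nderiv_taylor_wide (mulrC _ _) sz) coef_sum.
rewrite (bigD1 (Ordinal (leq_addr (size p) k.+1))) //= coefMXn ltnn subnn.
rewrite nderivn_map horner_map coefC /= big1 ?addr0 // => i ni.
have ik : (i != k :> nat) by apply: contraNneq ni => ik; exact/eqP/val_inj.
rewrite coefMXn nderivn_map horner_map coefC; case: ltnP => // ki.
by rewrite subn_eq0 leqNgt ltn_neqAle ik ki.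
Qed.

End Taylor.

Lemma nderiv2E (F : numFieldType) (p : {poly F}) : p^`N(2) = 2^-1 *: p^`()^`().
Proof.
rewrite -[p^`()^`()]/(p^`(2)) nderivn_def -[p^`N(2) *+ _]scaler_nat scalerA.
by rewrite mulVf ?pnatr_eq0 // scale1r.
Qed.

Section PolyIntegral.
Variable R : realType.
Implicit Types (p : {poly R}) (f : nat -> {poly R}) (c : nat -> R).

Definition int01 (p : {poly R}) : R :=
  \int[lebesgue_measure]_(t in `[0%R, 1%R]) p.[t].

Lemma horner_integrable01 p :
  (@lebesgue_measure R).-integrable `[0%R, 1%R] (EFin \o horner p).
Proof.
apply: continuous_compact_integrable; first exact: segment_compact.
by apply: continuous_in_subspaceT => x _; exact: continuous_horner.
Qed.

Fact int01_is_linear : linear int01.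
Proof.
move=> c p q; rewrite /int01.
under eq_Rintegral do rewrite hornerD hornerZ.
rewrite RintegralD ?RintegralZl ?horner_integrable01//.
have := horner_integrable01 (c *: p).
by apply: eq_integrable => // x _ /=; rewrite hornerZ.
Qed.

HB.instance Definition _ :=
  GRing.isLinear.Build R {poly R} R *%R int01 int01_is_linear.

Lemma int01_conv_polyC f c n :
  int01 (conv f (fun k => (c k)%:P) n) = conv (fun k => int01 (f k)) c n.
Proof.
by rewrite linear_sum; apply: eq_bigr => i _; rewrite mulrC mul_polyC linearZ mulrC.
Qed.

Lemma int01_deriv p : int01 p^`() = p.[1] - p.[0].
Proof.
rewrite /int01 /Rintegral (@continuous_FTC2 _ _ (horner p))//.
- by apply: continuous_in_subspaceT => x _; exact: continuous_horner.
- split.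
  + by move=> x _; exact: derivable_horner.
  + by apply: cvg_at_right_filter; exact: continuous_horner.
  + by apply: cvg_at_left_filter; exact: continuous_horner.
- by move=> x _; rewrite -derivE.
Qed.

End PolyIntegral.

Section GregoryCoefficients.
Variable R : realType.
Implicit Types (a b i k n : nat) (x : R).

Local Notation logc := (@logc R).
Local Notation logcP := (fun k => (logc k)%:P).

Lemma logc0 : logc 0 = 0.
Proof. by []. Qed.

Lemma logc1 : logc 1 = 1.
Proof. by rewrite /logc expr2 mulrNN mulr1 divr1. Qed.

Definition binomp a : {poly R} := a`!%:R^-1 *: \prod_(i < a) ('X - i%:R%:P).

Lemma binompE a x : (binomp a).[x] = gbinom x a.
Proof.
rewrite /binomp /gbinom hornerZ horner_prod mulrC; congr (_ * _).
by apply: eq_bigr => i _; rewrite hornerXsubC.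
Qed.

Lemma binomp0 : binomp 0 = 1.
Proof. by rewrite /binomp big_ord0 fact0 invr1 scale1r. Qed.

Lemma binompSr a : binomp a * ('X - a%:R%:P) = a.+1%:R *: binomp a.+1.
Proof.
rewrite /binomp big_ord_recr /= factS natrM invfM -scalerAl !scalerA.
by rewrite mulrA mulfV ?pnatr_eq0 // mul1r.
Qed.

Lemma binompM_XsubC i a : (i <= a)%N ->
  binomp i * ('X - a%:R%:P) = i.+1%:R *: binomp i.+1 - (a - i)%:R *: binomp i.
Proof.
move=> ia; rewrite -binompSr -mul_polyC [_%:P * _]mulrC -mulrBr; congr (_ * _).
by rewrite natrB // polyCB opprB addrA subrK.
Qed.

Lemma binomp_at0 a : (binomp a).[0] = (a == 0)%:R.
Proof.
rewrite binompE /gbinom; case: a => [|a]; first by rewrite big_ord0 fact0 divr1.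
by rewrite big_ord_recl /= subrr mul0r mul0r.
Qed.

Lemma binomp_at1 a : (binomp a).[1] = (a <= 1)%:R.
Proof.
rewrite binompE /gbinom; case: a => [|[|a]].
- by rewrite big_ord0 fact0 divr1.
- by rewrite big_ord1 subr0 divr1.
- by rewrite big_ord_recl big_ord_recl /= subrr mul0r mulr0 mul0r.
Qed.

Definition klogc k : R := k%:R * logc k.

Lemma klogcS k : klogc k.+1 = (-1) ^+ k.
Proof.
rewrite /klogc /logc mulrCA mulfV ?pnatr_eq0 // mulr1.
by rewrite !exprS !mulN1r opprK.
Qed.

Lemma klogc_telescope a :
  \sum_(i < a.+2) klogc (a.+1 - i) *: binomp i
  + \sum_(i < a.+1) klogc (a - i) *: binomp i = binomp a.
Proof.
rewrite big_ord_recr /= subnn /klogc mul0r scale0r addr0 -big_split /=.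
rewrite big_ord_recr /= subSn // !subnn -/(klogc 1) klogcS /klogc mul0r.
rewrite scale0r addr0 scale1r big1 ?add0r // => i _.
rewrite -scalerDl (subSn (ltnW (ltn_ord i))) -(subnSK (ltn_ord i)).
by rewrite -/(klogc _.+2) -/(klogc _.+1) !klogcS exprS mulN1r addNr scale0r.
Qed.

Lemma conv_logcE f n :
  conv f logcP n = \sum_(i < n.+1) logc (n - i) *: f i.
Proof. by apply: eq_bigr => i _; rewrite mulrC mul_polyC. Qed.

Lemma deriv_binomp a : (binomp a)^`() = conv binomp logcP a.
Proof.
elim: a => [|a IH].
  by rewrite binomp0 -polyC1 derivC /conv big_ord1 logc0 mulr0.
have -> : binomp a.+1 = a.+1%:R^-1 *: (binomp a * ('X - a%:R%:P)).
  by rewrite binompSr scalerA mulVf ?pnatr_eq0 // scale1r.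
rewrite derivZ derivM derivXsubC mulr1 IH.
suff -> : conv binomp logcP a * ('X - a%:R%:P) + binomp a
          = a.+1%:R *: conv binomp logcP a.+1.
  by rewrite scalerA mulVf ?pnatr_eq0 // scale1r.
rewrite !conv_logcE big_distrl /=.
under eq_bigr => i _.
  rewrite -scalerAl (binompM_XsubC (ltn_ord i : (i <= a)%N)) scalerBr.
  rewrite ![_ *: (_ *: binomp _)]scalerA.
  rewrite [logc _ * _]mulrC [logc _ * _]mulrC -/(klogc _).
  over.
rewrite sumrB /= -[in X in _ + X](klogc_telescope a) addrCA subrK scaler_sumr.
have split_a (i : 'I_a.+2) : a.+1%:R = (a.+1 - i)%:R + i%:R :> R.
  by rewrite -natrD subnK // -ltnS.
under [in RHS]eq_bigr => i _.
  rewrite [_ *: (_ *: binomp _)]scalerA [X in X * _](split_a i) mulrDl.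
  rewrite scalerDl -/(klogc _).
  over.
rewrite big_split /=; congr (_ + _).
rewrite [RHS]big_ord_recl mul0r scale0r add0r.
by apply: eq_bigr => i _; rewrite lift0 subSS.
Qed.

Local Notation log2c := (@log2c R).
Local Notation log2cP := (fun k => (log2c k)%:P).

Lemma deriv2_binomp n : (binomp n)^`()^`() = conv binomp log2cP n.
Proof.
rewrite deriv_binomp deriv_conv_polyC (eq_conv deriv_binomp (frefl _)) convA.
by apply: eq_conv => // k; rewrite conv_polyC.
Qed.

Definition gregory_kernel b : {poly R} := (binomp b)^`()^`() \Po (1 - 'X).

Lemma deriv_gregory_kernel b :
  (gregory_kernel b)^`() = - conv gregory_kernel logcP b.
Proof.
rewrite /gregory_kernel deriv_comp derivB derivX -polyC1 derivC sub0r mulrN1.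
by rewrite deriv_binomp !deriv_conv_polyC comp_conv_polyC.
Qed.

Lemma gregory_kernel_at1 b : (gregory_kernel b).[1] = log2c b.
Proof.
rewrite /gregory_kernel horner_comp !hornerE subrr deriv2_binomp.
rewrite horner_conv_polyC /conv big_ord_recl binomp_at0 subn0 mul1r.
by rewrite big1 ?addr0 // => i _; rewrite binomp_at0 lift0 mul0r.
Qed.

Lemma gregory_kernel_at0 b : (gregory_kernel b).[0] = log2c b + log2c b.-1.
Proof.
rewrite /gregory_kernel horner_comp !hornerE subr0 deriv2_binomp.
rewrite horner_conv_polyC /conv; case: b => [|b].
  by rewrite big_ord1 binomp_at1 mul1r /log2c big_ord1 logc0 mul0r addr0.
rewrite big_ord_recl big_ord_recl binomp_at1 mul1r lift0 binomp_at1 mul1r /=.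
rewrite big1 ?addr0 ?subn0 ?subn1 // => i _.
by rewrite binomp_at1 mul0r.
Qed.

Definition risingp n : {poly R} := \prod_(k < n) ('X + k%:R%:P).

Lemma stirling1pE n m x : stirling1p n m x = (risingp n \Po ('X + x%:P))`_m.
Proof.
rewrite /stirling1p /risingp.
suff -> : \prod_(k < n) ('X + (x + k%:R)%:P)
          = \prod_(k < n) ('X + k%:R%:P) \Po ('X + x%:P) by [].
elim/big_rec2: _ => [|i y p _ ->]; first by rewrite -polyC1 comp_polyC.
by rewrite comp_polyM comp_polyD comp_polyX comp_polyC polyCD addrA.
Qed.

Lemma binomp_compN n : binomp n \Po - 'X = (n`!%:R^-1 * (-1) ^+ n) *: risingp n.
Proof.
rewrite /binomp comp_polyZ -scalerA; congr (_ *: _).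
rewrite (rmorph_prod (comp_poly (- 'X))) /=.
under eq_bigr do rewrite comp_polyB comp_polyX comp_polyC -opprD.
by rewrite prodrN card_ord -mul_polyC rmorphXn rmorphN1.
Qed.

Lemma risingpE n : risingp n = ((-1) ^+ n * n`!%:R) *: (binomp n \Po - 'X).
Proof.
rewrite binomp_compN scalerA -mulrA mulVKf ?pnatr_eq0 -?lt0n ?fact_gt0 //.
by rewrite -expr2 sqrr_sign scale1r.
Qed.

Lemma stirling1p2E n x :
  stirling1p n 2 x = (-1) ^+ n * n`!%:R / 2 * ((binomp n)^`()^`()).[- x].
Proof.
rewrite stirling1pE coef_comp_shift risingpE nderiv2E 2!derivZ !deriv_compN.
rewrite derivN deriv_compN opprK 2!hornerZ horner_comp hornerN hornerX.
by rewrite mulrA (mulrC 2^-1).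
Qed.

Local Notation denomc := (@denomc R).
Local Notation numerc := (@numerc R).

Lemma bimulBl (F1 F2 H : nat -> nat -> R) a b :
  bimul (fun i j => F1 i j - F2 i j) H a b = bimul F1 H a b - bimul F2 H a b.
Proof.
rewrite /bimul -sumrB; apply: eq_bigr => i _.
by rewrite -sumrB; apply: eq_bigr => j _; rewrite mulrBl.
Qed.

Lemma bimul_denomc (F : nat -> nat -> R) a b :
  bimul F denomc a b = conv (fun i => F i b) logc a - conv (F a) logc b.
Proof.
rewrite /bimul /denomc.
under eq_bigr => i _ do under eq_bigr => j _ do rewrite mulrBr.
under eq_bigr => i _ do rewrite sumrB.
rewrite sumrB; congr (_ - _).
  apply: eq_bigr => i _; rewrite big_ord_recr /= subnn eqxx big1 ?add0r // => j _.
  by rewrite subn_eq0 leqNgt ltn_ord mulr0.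
rewrite big_ord_recr /= subnn big1 ?add0r => [|i _]; last first.
  by apply: big1 => j _; rewrite subn_eq0 leqNgt ltn_ord mulr0.
by apply: eq_bigr => j _; rewrite eqxx.
Qed.

(* The coefficient (a+1, b) of D * denomc is D a b plus terms D i j with
   i + j < a + b, or i + j = a + b and j < b. *)
Lemma bimul_denomc_eq0 (D : nat -> nat -> R) :
  (forall a b, bimul D denomc a b = 0) -> forall a b, D a b = 0.
Proof.
move=> HD; suff Hs s a b : (a + b)%N = s -> D a b = 0 by move=> a b; exact: Hs.
elim/ltn_ind: s a b => s IHs a b.
elim/ltn_ind: b a => b IHb a sab.
have := HD a.+1 b; rewrite bimul_denomc /conv.
rewrite big_ord_recr [X in _ - X]big_ord_recr /= !subnn logc0 !mulr0 !addr0.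
rewrite big_ord_recr /= subSn // subnn logc1 mulr1.
rewrite big1 => [|i _]; last by rewrite (IHs (i + b)%N) ?mul0r // -sab ltn_add2r.
rewrite big1 ?add0r ?subr0 // => j _.
have : (a.+1 + j <= s)%N by rewrite -sab addSn -addnS leq_add2l.
rewrite leq_eqVlt => /orP[/eqP|] ajs; first by rewrite (IHb j _ a.+1) ?mul0r.
by rewrite (IHs _ ajs a.+1 j) ?mul0r.
Qed.

Definition gregory_edge a b : R :=
  (if b == 1%N then logc a else 0) + (if a == 0%N then logc b.-1 else 0).

Lemma conv_logc_pred n : conv (fun j => logc j.-1) logc n = log2c n.-1.
Proof.
case: n => [|n]; first by rewrite /conv /log2c !big_ord1.
by rewrite /conv big_ord_recl logc0 mul0r add0r.
Qed.

Lemma bimul_gregory_edge a b : bimul gregory_edge denomc a b =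
  (if b == 1%N then log2c a else 0) - (if a == 0%N then log2c b.-1 else 0).
Proof.
rewrite bimul_denomc /gregory_edge !convDl !conv_ifl conv_logc_pred.
have -> : conv (fun i => if i == 0%N then logc b.-1 else 0) logc a
          = logc b.-1 * logc a.
  by rewrite /conv big_ord_recl subn0 big1 ?addr0 // => i _; rewrite mul0r.
have -> : conv (fun j => if j == 1%N then logc a else 0) logc b
          = logc a * logc b.-1.
  case: b => [|b]; first by rewrite /conv big_ord1 logc0 !mulr0.
  rewrite /conv big_ord_recl mul0r add0r big_ord_recl subn1 big1 ?addr0 //.
  by move=> i _; rewrite mul0r.
by rewrite mulrC addrKA.
Qed.

Definition gregory_bulk a b : R := int01 (binomp a * gregory_kernel b).

Definition gregory_coef a b : R := gregory_edge a b - gregory_bulk a b.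

Lemma bimul_gregory_bulk a b : bimul gregory_bulk denomc a b =
  (binomp a * gregory_kernel b).[1] - (binomp a * gregory_kernel b).[0].
Proof.
rewrite bimul_denomc.
have -> : conv (fun i => gregory_bulk i b) logc a
          = int01 ((binomp a)^`() * gregory_kernel b).
  by rewrite deriv_binomp -conv_mulr int01_conv_polyC.
have -> : conv (gregory_bulk a) logc b
          = - int01 (binomp a * (gregory_kernel b)^`()).
  by rewrite deriv_gregory_kernel mulrN linearN /= opprK -conv_mull int01_conv_polyC.
by rewrite opprK -linearD /= -derivM int01_deriv.
Qed.

Lemma gregory_coef_is_gregory : is_gregory gregory_coef.
Proof.
move=> a b; rewrite bimulBl bimul_gregory_edge bimul_gregory_bulk !hornerM.
rewrite binomp_at0 binomp_at1 gregory_kernel_at0 gregory_kernel_at1 /numerc.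
by case: a => [|[|a]] /=; rewrite ?mul1r ?mul0r; ring.
Qed.

Lemma is_gregory_unique (G1 G2 : nat -> nat -> R) :
  is_gregory G1 -> is_gregory G2 -> forall a b, G1 a b = G2 a b.
Proof.
move=> HG1 HG2 a b; apply/eqP; rewrite -subr_eq0; apply/eqP.
apply: (@bimul_denomc_eq0 (fun i j => G1 i j - G2 i j)) => i j.
by rewrite bimulBl HG1 HG2 subrr.
Qed.

Lemma gregory_coefE m n : (1 <= m)%N -> (2 <= n)%N ->
  gregory_coef m n = - gregory_bulk m n.
Proof.
case: m => // m _; case: n => [|[|n]] // _.
by rewrite /gregory_coef /gregory_edge add0r sub0r.
Qed.

Lemma integral_gbinom_stirling1p m n :
  \int[lebesgue_measure]_(t in `[0%R, 1%R]) (gbinom t m * stirling1p n 2 (t - 1))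
  = (-1) ^+ n * n`!%:R / 2 * gregory_bulk m n.
Proof.
rewrite /gregory_bulk /int01 -RintegralZl ?horner_integrable01 //.
apply: eq_Rintegral => t _; rewrite stirling1p2E hornerM binompE /gregory_kernel.
by rewrite horner_comp hornerD hornerN hornerC hornerX opprB mulrCA.
Qed.

End GregoryCoefficients.

Lemma sign_fact_normalization (R : numFieldType) n : (0 < n)%N ->
  2 * (-1) ^+ n.-1 / n`!%:R * ((-1) ^+ n * n`!%:R / 2) = -1 :> R.
Proof.
case: n => // n _; rewrite exprS /=.
transitivity (- ((-1) ^+ n * (-1) ^+ n) : R); last by rewrite -expr2 sqrr_sign.
by field; rewrite pnatr_eq0 -lt0n fact_gt0.
Qed.

Theorem theorem5p3 (R : realType) :
  (exists G : nat -> nat -> R, is_gregory G) /\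
  forall (G : nat -> nat -> R), is_gregory G ->
  forall m n : nat, (1 <= m)%N -> (2 <= n)%N ->
    G m n = 2 * (-1) ^+ n.-1 / n`!%:R *
      \int[lebesgue_measure]_(t in `[0%R, 1%R])
         (gbinom t m * stirling1p n 2 (t - 1)).
Proof.
have Hgreg := @gregory_coef_is_gregory R.
split; first by exists (@gregory_coef R).
move=> G HG m n m1 n2.
rewrite (is_gregory_unique HG Hgreg) gregory_coefE // integral_gbinom_stirling1p.
by rewrite mulrA sign_fact_normalization ?mulN1r // (leq_trans _ n2).
Qed.
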